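(* Let $(X,I,T)$ be a relative monad and $(S,S_0)$ a monad compatible with $I$ in a 2-category $\mathcal{K}$, and let $\hat T$ be a lifting of $T$ to the algebras of $(S,S_0)$. Let $\widehat{m_0}\colon STS_0\Rightarrow TS_0$ be the $S$-algebra structure of $\hat T(S_0,m_0)$, where $(S_0,m_0)$ is regarded as an $X_0$-indexed $S_0$-algebra. Then $$d:=\widehat{m_0}\cdot STs_0\colon ST\Rightarrow TS_0$$ is a relative distributive law of $T$ over $(S,S_0)$.
   Context: Conventions: 1-cells compose by juxtaposition; vertical composition of 2-cells is written $\cdot$; whiskering by juxtaposition. Relative monad: a relative monad $(X,I,T)$ in $\mathcal{K}$ consists of objects $X_0,X$, 1-cells $I,T\colon X_0\to X$, an operator $(-)^\dagger\colon[I,T]\to[T,T]$ (extension: for every span $A,B\colon O\to X_0$ a function sending 2-cells $IA\Rightarrow TB$ to 2-cells $TA\Rightarrow TB$, natural in $O$, $A$ and $B$) and a 2-cell $t\colon I\Rightarrow T$ such that $k^\dagger\cdot tA=k$, $(tA)^\dagger=1_{TA}$, $(l^\dagger\cdot k)^\dagger=l^\dagger\cdot k^\dagger$ for all $k\colon IA\Rightarrow TB$, $l\colon IB\Rightarrow TC$. Monad compatible with $I\colon X_0\to X$: a pair $(S,S_0)$ of monads $(X,S,m,s)$ and $(X_0,S_0,m_0,s_0)$ in $\mathcal{K}$ with $SI=IS_0$, $mI=Im_0$, $sI=Is_0$. Relative distributive law: a 2-cell $d\colon ST\Rightarrow TS_0$ such that (D1) $d\cdot mT=Tm_0\cdot dS_0\cdot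 Sd$; (D2) $d\cdot sT=Ts_0$; (D3) for all $A,B\colon O\to X_0$ and $f\colon IA\Rightarrow TB$, $dB\cdot S(f^\dagger)=(dB\cdot Sf)^\dagger\cdot dA$ (here $dB\cdot Sf\colon IS_0A=SIA\Rightarrow TS_0B$); (D4) $d\cdot St=tS_0$ as 2-cells $SI=IS_0\Rightarrow TS_0$. Indexed algebras: for a monad $(X,S,m,s)$ and object $K$, $S\text{-}\mathrm{Alg}(K)$ is the category whose objects are pairs $(M,\mu)$ with $M\colon K\to X$, $\mu\colon SM\Rightarrow M$, $\mu\cdot sM=1_M$, $\mu\cdot S\mu=\mu\cdot mM$, and whose morphisms $(M,\mu)\to(N,\nu)$ are 2-cells $f\colon M\Rightarrow N$ with $f\cdot\mu=\nu\cdot Sf$; this gives a 2-functor $S\text{-}\mathrm{Alg}(-)\colon\mathcal{K}^{op}\to\mathbf{Cat}$ by precomposition. Lifting to algebras: a lifting of $T$ to the algebras of $(S,S_0)$ is a 2-natural transformation $\hat T\colon S_0\text{-}\mathrm{Alg}(-)\to S\text{-}\mathrm{Alg}(-)$ of the form $\hat T(M,\mu)=(TM,\hat T\mu)$ on objects and $\hat T(f)=Tf$ on morphisms, carrying the relative monad structure over $I_*\colon(M,\mu)\mapsto(IM,I\mu)$ whose unit and extension are those of $T$, which means precisely: (a) for all $K$-indexed $S_0$-algebras $(M,\mu),(N,\nu)$ and every 2-cell $f\colon IM\Rightarrow TN$ with $f\cdot I\mu=\hat T\nu\cdot Sf$, one has $f^\dagger\cdot\hat T\mu=\hat T\nu\cdot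 Sf^\dagger$; (b) for every $(M,\mu)$, $tM\cdot I\mu=\hat T\mu\cdot StM$. *)

Set Implicit Arguments.
Unset Strict Implicit.

Record TwoCategory : Type := {
  obj : Type;
  cell1 : Type;
  cell2 : Type;
  src1 : cell1 -> obj;
  tgt1 : cell1 -> obj;
  id1 : obj -> cell1;
  (* comp1 f g = f g  = "f after g" (juxtaposition) *)
  comp1 : cell1 -> cell1 -> cell1;
  dom2 : cell2 -> cell1;
  cod2 : cell2 -> cell1;
  id2 : cell1 -> cell2;
  (* vcomp a b = a . b  (b first) *)
  vcomp : cell2 -> cell2 -> cell2;
  (* lwhisk f a = f a ;  rwhisk a f = a f *)
  lwhisk : cell1 -> cell2 -> cell2;
  rwhisk : cell2 -> cell1 -> cell2;

  src_id1 : forall x, src1 (id1 x) = x;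
  tgt_id1 : forall x, tgt1 (id1 x) = x;
  src_comp1 : forall f g, src1 f = tgt1 g -> src1 (comp1 f g) = src1 g;
  tgt_comp1 : forall f g, src1 f = tgt1 g -> tgt1 (comp1 f g) = tgt1 f;
  comp1A : forall f g h, src1 f = tgt1 g -> src1 g = tgt1 h ->
    comp1 f (comp1 g h) = comp1 (comp1 f g) h;
  comp1_id1l : forall f, comp1 (id1 (tgt1 f)) f = f;
  comp1_id1r : forall f, comp1 f (id1 (src1 f)) = f;

  src_dom2 : forall a, src1 (dom2 a) = src1 (cod2 a);
  tgt_dom2 : forall a, tgt1 (dom2 a) = tgt1 (cod2 a);
  dom_id2 : forall f, dom2 (id2 f) = f;
  cod_id2 : forall f, cod2 (id2 f) = f;
  dom_vcomp : forall a b, dom2 a = cod2 b -> dom2 (vcomp a b) = dom2 b;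
  cod_vcomp : forall a b, dom2 a = cod2 b -> cod2 (vcomp a b) = cod2 a;
  vcompA : forall a b c, dom2 a = cod2 b -> dom2 b = cod2 c ->
    vcomp a (vcomp b c) = vcomp (vcomp a b) c;
  vcomp_id2l : forall a, vcomp (id2 (cod2 a)) a = a;
  vcomp_id2r : forall a, vcomp a (id2 (dom2 a)) = a;

  dom_lwhisk : forall f a, src1 f = tgt1 (dom2 a) ->
    dom2 (lwhisk f a) = comp1 f (dom2 a);
  cod_lwhisk : forall f a, src1 f = tgt1 (dom2 a) ->
    cod2 (lwhisk f a) = comp1 f (cod2 a);
  dom_rwhisk : forall a f, src1 (dom2 a) = tgt1 f ->
    dom2 (rwhisk a f) = comp1 (dom2 a) f;
  cod_rwhisk : forall a f, src1 (dom2 a) = tgt1 f ->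
    cod2 (rwhisk a f) = comp1 (cod2 a) f;
  lwhisk_id2 : forall f g, src1 f = tgt1 g -> lwhisk f (id2 g) = id2 (comp1 f g);
  rwhisk_id2 : forall g f, src1 g = tgt1 f -> rwhisk (id2 g) f = id2 (comp1 g f);
  lwhisk_vcomp : forall f a b, src1 f = tgt1 (dom2 a) -> dom2 a = cod2 b ->
    lwhisk f (vcomp a b) = vcomp (lwhisk f a) (lwhisk f b);
  rwhisk_vcomp : forall a b f, src1 (dom2 a) = tgt1 f -> dom2 a = cod2 b ->
    rwhisk (vcomp a b) f = vcomp (rwhisk a f) (rwhisk b f);
  lwhisk_comp1 : forall f g a, src1 f = tgt1 g -> src1 g = tgt1 (dom2 a) ->
    lwhisk (comp1 f g) a = lwhisk f (lwhisk g a);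
  rwhisk_comp1 : forall a f g, src1 (dom2 a) = tgt1 f -> src1 f = tgt1 g ->
    rwhisk a (comp1 f g) = rwhisk (rwhisk a f) g;
  lwhisk_id1 : forall a, lwhisk (id1 (tgt1 (dom2 a))) a = a;
  rwhisk_id1 : forall a, rwhisk a (id1 (src1 (dom2 a))) = a;
  lrwhisk : forall f a g, src1 f = tgt1 (dom2 a) -> src1 (dom2 a) = tgt1 g ->
    lwhisk f (rwhisk a g) = rwhisk (lwhisk f a) g;
  interchange : forall a b, src1 (dom2 a) = tgt1 (dom2 b) ->
    vcomp (rwhisk a (cod2 b)) (lwhisk (dom2 a) b)
    = vcomp (lwhisk (cod2 a) b) (rwhisk a (dom2 b))
}.

Section TwoCatNotions.
Context {C : TwoCategory}.

Definition hom1 (f : cell1 C) (x y : obj C) : Prop := src1 f = x /\ tgt1 f = y.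
Definition hom2 (a : cell2 C) (f g : cell1 C) : Prop := dom2 a = f /\ cod2 a = g.

Record is_monad (X : obj C) (S : cell1 C) (m s : cell2 C) : Prop := {
  mon_S : hom1 S X X;
  mon_m : hom2 m (comp1 S S) S;
  mon_s : hom2 s (id1 X) S;
  mon_assoc : vcomp m (lwhisk S m) = vcomp m (rwhisk m S);
  mon_unitl : vcomp m (rwhisk s S) = id2 S;
  mon_unitr : vcomp m (lwhisk S s) = id2 S
}.

(* A relative monad (X, I, T) with extension ext A B : [IA, TB] -> [TA, TB]
   and unit t : I => T. *)
Record is_relative_monad (X0 X : obj C) (I T : cell1 C)
    (ext : cell1 C -> cell1 C -> cell2 C -> cell2 C) (t : cell2 C) : Prop := {
  rm_I : hom1 I X0 X;
  rm_T : hom1 T X0 X;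
  rm_t : hom2 t I T;
  rm_ext_type : forall O A B k, hom1 A O X0 -> hom1 B O X0 ->
    hom2 k (comp1 I A) (comp1 T B) -> hom2 (ext A B k) (comp1 T A) (comp1 T B);
  rm_nat_O : forall O O' A B k h, hom1 A O X0 -> hom1 B O X0 ->
    hom2 k (comp1 I A) (comp1 T B) -> hom1 h O' O ->
    ext (comp1 A h) (comp1 B h) (rwhisk k h) = rwhisk (ext A B k) h;
  rm_nat_A : forall O A A' B k a, hom1 A O X0 -> hom1 A' O X0 -> hom1 B O X0 ->
    hom2 k (comp1 I A) (comp1 T B) -> hom2 a A' A ->
    ext A' B (vcomp k (lwhisk I a)) = vcomp (ext A B k) (lwhisk T a);
  rm_nat_B : forall O A B B' k b, hom1 A O X0 -> hom1 B O X0 -> hom1 B' O X0 ->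
    hom2 k (comp1 I A) (comp1 T B) -> hom2 b B B' ->
    ext A B' (vcomp (lwhisk T b) k) = vcomp (lwhisk T b) (ext A B k);
  rm_unit1 : forall O A B k, hom1 A O X0 -> hom1 B O X0 ->
    hom2 k (comp1 I A) (comp1 T B) -> vcomp (ext A B k) (rwhisk t A) = k;
  rm_unit2 : forall O A, hom1 A O X0 -> ext A A (rwhisk t A) = id2 (comp1 T A);
  rm_assoc : forall O A B D k l, hom1 A O X0 -> hom1 B O X0 -> hom1 D O X0 ->
    hom2 k (comp1 I A) (comp1 T B) -> hom2 l (comp1 I B) (comp1 T D) ->
    ext A D (vcomp (ext B D l) k) = vcomp (ext B D l) (ext A B k)
}.

Record compatible_monad (X0 X : obj C) (I : cell1 C)
    (S : cell1 C) (m s : cell2 C) (S0 : cell1 C) (m0 s0 : cell2 C) : Prop := {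
  cm_I : hom1 I X0 X;
  cm_S : is_monad X S m s;
  cm_S0 : is_monad X0 S0 m0 s0;
  cm_SI : comp1 S I = comp1 I S0;
  cm_m : rwhisk m I = lwhisk I m0;
  cm_s : rwhisk s I = lwhisk I s0
}.

Definition is_alg (X : obj C) (S : cell1 C) (m s : cell2 C)
    (K : obj C) (M : cell1 C) (mu : cell2 C) : Prop :=
  hom1 M K X /\ hom2 mu (comp1 S M) M /\
  vcomp mu (rwhisk s M) = id2 M /\
  vcomp mu (lwhisk S mu) = vcomp mu (rwhisk m M).

Definition is_alg_mor (S : cell1 C) (M : cell1 C) (mu : cell2 C)
    (N : cell1 C) (nu : cell2 C) (f : cell2 C) : Prop :=
  hom2 f M N /\ vcomp f mu = vcomp nu (lwhisk S f).

(* A lifting hatT of T to the algebras of (S, S0):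
   (M, mu) |-> (T M, hatT M mu), f |-> T f, 2-natural in the index object,
   carrying the relative monad structure (conditions (a), (b)). *)
Record is_lifting (X0 X : obj C) (I T : cell1 C)
    (ext : cell1 C -> cell1 C -> cell2 C -> cell2 C) (t : cell2 C)
    (S : cell1 C) (m s : cell2 C) (S0 : cell1 C) (m0 s0 : cell2 C)
    (hatT : cell1 C -> cell2 C -> cell2 C) : Prop := {
  lift_obj : forall K M mu, is_alg X0 S0 m0 s0 K M mu ->
    is_alg X S m s K (comp1 T M) (hatT M mu);
  lift_mor : forall K M mu N nu f,
    is_alg X0 S0 m0 s0 K M mu -> is_alg X0 S0 m0 s0 K N nu ->
    is_alg_mor S0 M mu N nu f ->
    is_alg_mor S (comp1 T M) (hatT M mu) (comp1 T N) (hatT N nu) (lwhisk T f);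
  lift_nat : forall K K' M mu h, is_alg X0 S0 m0 s0 K M mu -> hom1 h K' K ->
    hatT (comp1 M h) (rwhisk mu h) = rwhisk (hatT M mu) h;
  lift_ext : forall K M mu N nu f,
    is_alg X0 S0 m0 s0 K M mu -> is_alg X0 S0 m0 s0 K N nu ->
    hom2 f (comp1 I M) (comp1 T N) ->
    vcomp f (lwhisk I mu) = vcomp (hatT N nu) (lwhisk S f) ->
    vcomp (ext M N f) (hatT M mu) = vcomp (hatT N nu) (lwhisk S (ext M N f));
  lift_unit : forall K M mu, is_alg X0 S0 m0 s0 K M mu ->
    vcomp (rwhisk t M) (lwhisk I mu) = vcomp (hatT M mu) (lwhisk S (rwhisk t M))
}.

Record is_rel_distr_law (X0 X : obj C) (I T : cell1 C)
    (ext : cell1 C -> cell1 C -> cell2 C -> cell2 C) (t : cell2 C)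
    (S : cell1 C) (m s : cell2 C) (S0 : cell1 C) (m0 s0 : cell2 C)
    (d : cell2 C) : Prop := {
  rd_type : hom2 d (comp1 S T) (comp1 T S0);
  rd_D1 : vcomp d (rwhisk m T)
          = vcomp (lwhisk T m0) (vcomp (rwhisk d S0) (lwhisk S d));
  rd_D2 : vcomp d (rwhisk s T) = lwhisk T s0;
  rd_D3 : forall O A B f, hom1 A O X0 -> hom1 B O X0 ->
    hom2 f (comp1 I A) (comp1 T B) ->
    vcomp (rwhisk d B) (lwhisk S (ext A B f))
    = vcomp (ext (comp1 S0 A) (comp1 S0 B) (vcomp (rwhisk d B) (lwhisk S f)))
            (rwhisk d A);
  rd_D4 : vcomp d (lwhisk S t) = rwhisk t S0
}.

End TwoCatNotions.


(* Write  mhat := hatT S0 m0 : S T S0 => T S0  for the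
   S-algebra structure that the lifting puts on T S0, and
   d := mhat . S T s0.
   Everything follows from three consequences of the lifting:
   - mhat is an S-algebra structure (unit and associativity laws);
   - T m0 : T S0 S0 => T S0 is an algebra map for the lifted structures,
     since m0 : (S0 S0, m0 S0) -> (S0, m0) is an S0-algebra map;
   - (lifting condition (b)) the unit t I S0 is compatible with mhat.
   From these: (D2) is the unit law of mhat, (D4) is condition (b) plus a
   unit law of S0, and mhat = T m0 . d S0 recovers mhat from d, from which
   (D1) is the associativity of mhat.  For (D3), the 2-cell g := dB . S f
   is compatible with the algebras (S0 A, m0 A), (S0 B, m0 B), so lifting
   condition (a) commutes its extension with mhat; naturality of the
   extension operator in A and B then turns this into (D3). *)

Section TypedLaws.
Context {C : TwoCategory}.

(* The unit laws of the 2-category, stated for an arbitrary (but equal)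
   object or 1-cell, so that they apply after typing facts are rewritten. *)
Lemma comp1_id1l_at (f : cell1 C) x : tgt1 f = x -> comp1 (id1 x) f = f.
Proof. intros <-; apply comp1_id1l. Qed.
Lemma comp1_id1r_at (f : cell1 C) x : src1 f = x -> comp1 f (id1 x) = f.
Proof. intros <-; apply comp1_id1r. Qed.
Lemma lwhisk_id1_at (a : cell2 C) x : tgt1 (dom2 a) = x -> lwhisk (id1 x) a = a.
Proof. intros <-; apply lwhisk_id1. Qed.
Lemma rwhisk_id1_at (a : cell2 C) x : src1 (dom2 a) = x -> rwhisk a (id1 x) = a.
Proof. intros <-; apply rwhisk_id1. Qed.
Lemma vcomp_id2l_at (a : cell2 C) f : cod2 a = f -> vcomp (id2 f) a = a.
Proof. intros <-; apply vcomp_id2l. Qed.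
Lemma vcomp_id2r_at (a : cell2 C) f : dom2 a = f -> vcomp a (id2 f) = a.
Proof. intros <-; apply vcomp_id2r. Qed.

Lemma interchange_at (a b : cell2 C) f f' g g' :
  dom2 a = f -> cod2 a = f' -> dom2 b = g -> cod2 b = g' -> src1 f = tgt1 g ->
  vcomp (rwhisk a g') (lwhisk f b) = vcomp (lwhisk f' b) (rwhisk a g).
Proof. intros <- <- <- <- H; apply interchange; auto. Qed.

End TypedLaws.

(* Typing side conditions (sources, targets, domains, codomains of composite
   cells) are decided by computing both sides: the typing facts in context
   are used as rewrite rules, 1-cells are right-associated and identities
   cancelled.  Hypotheses of the form  forall x, tgt1 x = _ -> comp1 _ _ = _
   (commutation of 1-cells) and the typing rules of an extension operator
   are used as conditional rewrite rules. *)
Ltac rewrite_type_fact :=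
  match goal with
  | H : src1 ?x = _ |- context [src1 ?x] => rewrite H
  | H : tgt1 ?x = _ |- context [tgt1 ?x] => rewrite H
  | H : dom2 ?x = _ |- context [dom2 ?x] => rewrite H
  | H : cod2 ?x = _ |- context [cod2 ?x] => rewrite H
  | H : comp1 ?f ?g = _ |- context [comp1 ?f ?g] => rewrite H
  end.

Ltac typecheck :=
  solve [ repeat (first
    [ rewrite_type_fact
    | rewrite src_id1 | rewrite tgt_id1 | rewrite dom_id2 | rewrite cod_id2
    | rewrite src_comp1 by typecheck | rewrite tgt_comp1 by typecheck
    | rewrite dom_vcomp by typecheck | rewrite cod_vcomp by typecheck
    | rewrite dom_lwhisk by typecheck | rewrite cod_lwhisk by typecheck
    | rewrite dom_rwhisk by typecheck | rewrite cod_rwhisk by typecheck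
    | rewrite <- comp1A by typecheck
    | rewrite comp1_id1l_at by typecheck | rewrite comp1_id1r_at by typecheck
    | match goal with
      | H : forall x, tgt1 x = _ -> comp1 _ (comp1 _ x) = _ |- _ =>
          rewrite H by typecheck
      | H : forall _ _ _, _ -> _ -> _ -> _ -> _ -> dom2 _ = _ |- _ =>
          rewrite H by typecheck
      | H : forall _ _ _, _ -> _ -> _ -> _ -> _ -> cod2 _ = _ |- _ =>
          rewrite H by typecheck
      end ]); reflexivity ].

Section MonadAlgebras.
Context {C : TwoCategory} {X : obj C} {S : cell1 C} {m s : cell2 C}.
Hypothesis monad_S : is_monad X S m s.

Let sS : src1 S = X. Proof. exact (proj1 (mon_S monad_S)). Qed.
Let tS : tgt1 S = X. Proof. exact (proj2 (mon_S monad_S)). Qed.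
Let dm : dom2 m = comp1 S S. Proof. exact (proj1 (mon_m monad_S)). Qed.
Let cm : cod2 m = S. Proof. exact (proj2 (mon_m monad_S)). Qed.
Let ds : dom2 s = id1 X. Proof. exact (proj1 (mon_s monad_S)). Qed.
Let cs : cod2 s = S. Proof. exact (proj2 (mon_s monad_S)). Qed.

Lemma monad_regular_alg : is_alg X S m s X S m.
Proof.
  repeat split; auto.
  - exact (mon_unitl monad_S).
  - exact (mon_assoc monad_S).
Qed.

(* Indexed algebras are stable under precomposition with a 1-cell h:
   this is the action of the 2-functor S-Alg(-) on 1-cells. *)
Lemma alg_precomp {K M mu K' h} :
  is_alg X S m s K M mu -> hom1 h K' K ->
  is_alg X S m s K' (comp1 M h) (rwhisk mu h).
Proof.
  intros [[sM tM] [[dmu cmu] [alg_unit alg_assoc]]] [sh th].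
  split; [split; typecheck | split; [split; typecheck | split]].
  - rewrite rwhisk_comp1, <- rwhisk_vcomp, alg_unit by typecheck.
    apply rwhisk_id2; typecheck.
  - rewrite rwhisk_comp1, lrwhisk, <- !rwhisk_vcomp by typecheck.
    rewrite alg_assoc; reflexivity.
Qed.

Lemma mult_alg_mor : is_alg_mor S (comp1 S S) (rwhisk m S) S m m.
Proof. split; [split; auto | symmetry; exact (mon_assoc monad_S)]. Qed.

End MonadAlgebras.

Section LiftedDistributiveLaw.
Context {C : TwoCategory} {X0 X : obj C} {I T : cell1 C}
  {ext : cell1 C -> cell1 C -> cell2 C -> cell2 C} {t : cell2 C}
  {S : cell1 C} {m s : cell2 C} {S0 : cell1 C} {m0 s0 : cell2 C}
  {hatT : cell1 C -> cell2 C -> cell2 C}.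
Hypothesis RM : is_relative_monad X0 X I T ext t.
Hypothesis CM : compatible_monad X0 X I S m s S0 m0 s0.
Hypothesis LF : is_lifting X0 X I T ext t S m s S0 m0 s0 hatT.

Let monad_S0 : is_monad X0 S0 m0 s0. Proof. exact (cm_S0 CM). Qed.
Let sI : src1 I = X0. Proof. exact (proj1 (cm_I CM)). Qed.
Let tI : tgt1 I = X. Proof. exact (proj2 (cm_I CM)). Qed.
Let sT : src1 T = X0. Proof. exact (proj1 (rm_T RM)). Qed.
Let tT : tgt1 T = X. Proof. exact (proj2 (rm_T RM)). Qed.
Let dt : dom2 t = I. Proof. exact (proj1 (rm_t RM)). Qed.
Let ct : cod2 t = T. Proof. exact (proj2 (rm_t RM)). Qed.
Let sS : src1 S = X. Proof. exact (proj1 (mon_S (cm_S CM))). Qed.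
Let tS : tgt1 S = X. Proof. exact (proj2 (mon_S (cm_S CM))). Qed.
Let dm : dom2 m = comp1 S S. Proof. exact (proj1 (mon_m (cm_S CM))). Qed.
Let cm : cod2 m = S. Proof. exact (proj2 (mon_m (cm_S CM))). Qed.
Let ds : dom2 s = id1 X. Proof. exact (proj1 (mon_s (cm_S CM))). Qed.
Let cs : cod2 s = S. Proof. exact (proj2 (mon_s (cm_S CM))). Qed.
Let sS0 : src1 S0 = X0. Proof. exact (proj1 (mon_S monad_S0)). Qed.
Let tS0 : tgt1 S0 = X0. Proof. exact (proj2 (mon_S monad_S0)). Qed.
Let dm0 : dom2 m0 = comp1 S0 S0. Proof. exact (proj1 (mon_m monad_S0)). Qed.
Let cm0 : cod2 m0 = S0. Proof. exact (proj2 (mon_m monad_S0)). Qed.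
Let ds0 : dom2 s0 = id1 X0. Proof. exact (proj1 (mon_s monad_S0)). Qed.
Let cs0 : cod2 s0 = S0. Proof. exact (proj2 (mon_s monad_S0)). Qed.
Let SI : comp1 S I = comp1 I S0. Proof. exact (cm_SI CM). Qed.

Let SI_at : forall x, tgt1 x = X0 -> comp1 S (comp1 I x) = comp1 I (comp1 S0 x).
Proof.
  intros x tx; rewrite comp1A, SI, <- comp1A by typecheck; reflexivity.
Qed.

Let ext_dom : forall A B k, tgt1 A = X0 -> tgt1 B = X0 -> src1 A = src1 B ->
  dom2 k = comp1 I A -> cod2 k = comp1 T B -> dom2 (ext A B k) = comp1 T A.
Proof. intros; apply (rm_ext_type RM (O := src1 A)); split; auto. Qed.
Let ext_cod : forall A B k, tgt1 A = X0 -> tgt1 B = X0 -> src1 A = src1 B ->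
  dom2 k = comp1 I A -> cod2 k = comp1 T B -> cod2 (ext A B k) = comp1 T B.
Proof. intros; apply (rm_ext_type RM (O := src1 A)); split; auto. Qed.

Local Notation mhat := (hatT S0 m0).

Lemma mhat_alg : is_alg X S m s X0 (comp1 T S0) mhat.
Proof. exact (lift_obj LF (monad_regular_alg monad_S0)). Qed.

Let dmhat : dom2 mhat = comp1 S (comp1 T S0).
Proof. destruct mhat_alg as [_ [[H _] _]]; rewrite H; typecheck. Qed.
Let cmhat : cod2 mhat = comp1 T S0.
Proof. destruct mhat_alg as [_ [[_ H] _]]; exact H. Qed.

Lemma hatT_precomp {O A} : hom1 A O X0 -> hatT (comp1 S0 A) (rwhisk m0 A) = rwhisk mhat A.
Proof. intros hA; exact (lift_nat LF (monad_regular_alg monad_S0) hA). Qed.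

Lemma T_m0_alg_mor :
  vcomp (lwhisk T m0) (rwhisk mhat S0) = vcomp mhat (lwhisk S (lwhisk T m0)).
Proof.
  assert (hS0 : hom1 S0 X0 X0) by (split; auto).
  pose proof (alg_precomp monad_S0 (monad_regular_alg monad_S0) hS0) as regular_S0.
  destruct (lift_mor LF regular_S0 (monad_regular_alg monad_S0)
              (mult_alg_mor monad_S0)) as [_ mor].
  rewrite (hatT_precomp hS0) in mor; exact mor.
Qed.

Definition lifted_law : cell2 C := vcomp mhat (lwhisk S (lwhisk T s0)).

Lemma lifted_law_type : hom2 lifted_law (comp1 S T) (comp1 T S0).
Proof. unfold lifted_law; split; typecheck. Qed.

Let dd : dom2 lifted_law = comp1 S T. Proof. exact (proj1 lifted_law_type). Qed.
Let cd : cod2 lifted_law = comp1 T S0. Proof. exact (proj2 lifted_law_type). Qed.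

(* (D2) is the unit law of the algebra (T S0, mhat). *)
Lemma lifted_law_unit : vcomp lifted_law (rwhisk s T) = lwhisk T s0.
Proof.
  destruct mhat_alg as [_ [_ [mhat_unit _]]].
  unfold lifted_law; rewrite <- vcompA by typecheck.
  rewrite <- (interchange_at s (lwhisk T s0) (id1 X) S T (comp1 T S0)),
    lwhisk_id1_at, vcompA, mhat_unit by typecheck.
  apply vcomp_id2l_at; typecheck.
Qed.

(* (D4): by lifting condition (b) and the unit law m0 . S0 s0 = 1. *)
Lemma lifted_law_rel_unit : vcomp lifted_law (lwhisk S t) = rwhisk t S0.
Proof.
  unfold lifted_law; rewrite <- vcompA, <- lwhisk_vcomp by typecheck.
  replace (vcomp (lwhisk T s0) t) with (vcomp (lwhisk T s0) (rwhisk t (id1 X0)))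
    by (rewrite rwhisk_id1_at by typecheck; reflexivity).
  rewrite <- (interchange_at t s0 I T (id1 X0) S0), lwhisk_vcomp, vcompA
    by typecheck.
  rewrite <- (lift_unit LF (monad_regular_alg monad_S0)).
  rewrite <- lwhisk_comp1, SI, lwhisk_comp1, <- vcompA, <- lwhisk_vcomp
    by typecheck.
  rewrite (mon_unitr monad_S0), lwhisk_id2 by typecheck.
  apply vcomp_id2r_at; typecheck.
Qed.

Lemma mhat_from_lifted_law : vcomp (lwhisk T m0) (rwhisk lifted_law S0) = mhat.
Proof.
  unfold lifted_law; rewrite rwhisk_vcomp, vcompA, T_m0_alg_mor by typecheck.
  rewrite <- !lrwhisk, <- vcompA, <- !lwhisk_vcomp by typecheck.
  rewrite (mon_unitl monad_S0), !lwhisk_id2 by typecheck.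
  apply vcomp_id2r_at; typecheck.
Qed.

(* (D1) is the associativity of the algebra (T S0, mhat). *)
Lemma lifted_law_mult :
  vcomp lifted_law (rwhisk m T)
  = vcomp (lwhisk T m0) (vcomp (rwhisk lifted_law S0) (lwhisk S lifted_law)).
Proof.
  destruct mhat_alg as [_ [_ [_ mhat_assoc]]].
  rewrite vcompA, mhat_from_lifted_law by typecheck.
  unfold lifted_law; rewrite lwhisk_vcomp, vcompA, mhat_assoc by typecheck.
  rewrite <- vcompA, <- vcompA by typecheck; f_equal.
  rewrite <- (@lwhisk_comp1 _ S S) by typecheck.
  symmetry; apply (interchange_at m (lwhisk T s0) (comp1 S S) S T (comp1 T S0));
    typecheck.
Qed.

Lemma lifted_law_precomp {A} : tgt1 A = X0 ->
  rwhisk lifted_law A = vcomp (rwhisk mhat A) (lwhisk S (lwhisk T (rwhisk s0 A))).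
Proof.
  intros tA; unfold lifted_law.
  rewrite rwhisk_vcomp, <- !lrwhisk by typecheck; reflexivity.
Qed.

Section Extension.
Context {O : obj C} {A B : cell1 C} {f : cell2 C}.
Hypotheses (sA : src1 A = O) (tA : tgt1 A = X0) (sB : src1 B = O) (tB : tgt1 B = X0).
Hypotheses (df : dom2 f = comp1 I A) (cf : cod2 f = comp1 T B).

Let g := vcomp (rwhisk lifted_law B) (lwhisk S f).
Let dg : dom2 g = comp1 I (comp1 S0 A). Proof. unfold g; typecheck. Qed.
Let cg : cod2 g = comp1 T (comp1 S0 B). Proof. unfold g; typecheck. Qed.

(* g is compatible with the algebras (S0 A, m0 A) and (S0 B, m0 B), which
   is the hypothesis of lifting condition (a); this uses (D1). *)
Lemma transpose_alg_compat :
  vcomp g (lwhisk I (rwhisk m0 A))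
  = vcomp (hatT (comp1 S0 B) (rwhisk m0 B)) (lwhisk S g).
Proof.
  rewrite (hatT_precomp (conj sB tB)); unfold g.
  rewrite <- vcompA, (@lrwhisk _ I m0 A), <- (cm_m CM), <- (@rwhisk_comp1 _ m I A)
    by typecheck.
  rewrite <- (interchange_at m f (comp1 S S) S (comp1 I A) (comp1 T B)),
    vcompA, (@rwhisk_comp1 _ m T B), <- (@rwhisk_vcomp _ lifted_law) by typecheck.
  rewrite lifted_law_mult, (@vcompA _ (lwhisk T m0)), mhat_from_lifted_law,
    rwhisk_vcomp, <- vcompA by typecheck.
  f_equal.
  rewrite (@lwhisk_vcomp _ S), <- (@lrwhisk _ S lifted_law B), (@lwhisk_comp1 _ S S f)
    by typecheck.
  reflexivity.
Qed.

(* Restricting g along the unit gives back f up to T s0 B; this uses (D2). *)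
Lemma transpose_unit :
  vcomp g (lwhisk I (rwhisk s0 A)) = vcomp (lwhisk T (rwhisk s0 B)) f.
Proof.
  unfold g; rewrite <- vcompA, (@lrwhisk _ I s0 A), <- (cm_s CM),
    <- (@rwhisk_comp1 _ s I A) by typecheck.
  rewrite <- (interchange_at s f (id1 X) S (comp1 I A) (comp1 T B)),
    lwhisk_id1_at, vcompA, (@rwhisk_comp1 _ s T B), <- (@rwhisk_vcomp _ lifted_law),
    lifted_law_unit, lrwhisk by typecheck.
  reflexivity.
Qed.

(* (D3): lifting condition (a) for g, then naturality of the extension in
   its two arguments along s0 A and s0 B. *)
Lemma lifted_law_ext :
  vcomp (rwhisk lifted_law B) (lwhisk S (ext A B f))
  = vcomp (ext (comp1 S0 A) (comp1 S0 B) g) (rwhisk lifted_law A).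
Proof.
  assert (hA : hom1 A O X0) by (split; auto).
  assert (hB : hom1 B O X0) by (split; auto).
  assert (hS0A : hom1 (comp1 S0 A) O X0) by (split; typecheck).
  assert (hS0B : hom1 (comp1 S0 B) O X0) by (split; typecheck).
  pose proof (lift_ext LF (alg_precomp monad_S0 (monad_regular_alg monad_S0) hA)
                (alg_precomp monad_S0 (monad_regular_alg monad_S0) hB)
                (conj dg cg) transpose_alg_compat) as ext_commutes.
  rewrite (hatT_precomp hA), (hatT_precomp hB) in ext_commutes.
  assert (unit_A : hom2 (rwhisk s0 A) A (comp1 S0 A)) by (split; typecheck).
  assert (unit_B : hom2 (rwhisk s0 B) B (comp1 S0 B)) by (split; typecheck).
  rewrite (lifted_law_precomp tA), vcompA, ext_commutes, <- vcompA,
    <- lwhisk_vcomp by typecheck.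
  rewrite <- (rm_nat_A RM hS0A hA hS0B (conj dg cg) unit_A), transpose_unit,
    (rm_nat_B RM hA hB hS0B (conj df cf) unit_B),
    lwhisk_vcomp, vcompA, <- (lifted_law_precomp tB) by typecheck.
  reflexivity.
Qed.

End Extension.

End LiftedDistributiveLaw.

Theorem mainTheorem11 (C : TwoCategory) (X0 X : obj C) (I T : cell1 C)
    (ext : cell1 C -> cell1 C -> cell2 C -> cell2 C) (t : cell2 C)
    (S : cell1 C) (m s : cell2 C) (S0 : cell1 C) (m0 s0 : cell2 C)
    (hatT : cell1 C -> cell2 C -> cell2 C) :
  is_relative_monad X0 X I T ext t ->
  compatible_monad X0 X I S m s S0 m0 s0 ->
  is_lifting X0 X I T ext t S m s S0 m0 s0 hatT ->
  is_rel_distr_law X0 X I T ext t S m s S0 m0 s0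
    (vcomp (hatT S0 m0) (lwhisk S (lwhisk T s0))).
Proof.
  intros RM CM LF; split.
  - exact (lifted_law_type RM CM LF).
  - exact (lifted_law_mult RM CM LF).
  - exact (lifted_law_unit RM CM LF).
  - intros O A B f [sA tA] [sB tB] [df cf].
    exact (lifted_law_ext RM CM LF sA tA sB tB df cf).
  - exact (lifted_law_rel_unit RM CM LF).
Qed.
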